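(* Let $s\ge1$ and $n_1\ge n_2\ge\dots\ge n_s>0$ be integers. Let $\mathfrak g$ be the complex vector space with basis $e_0,f_0,e^i_j,f^i_j$ ($i=1,\dots,s$, $j=1,\dots,n_i$), set $e^i_0=e_0$, $f^i_0=f_0$ for all $i$, and define a bracket by $[e^i_j,f^i_k]=e^i_{j-k}$ for $0\le k\le j\le n_i$, all other brackets of basis elements (not determined by these relations and antisymmetry) being zero. Then $\mathfrak g$ is a Lie algebra, and its Jordan–Kronecker invariants consist of the single Jordan tuple $J_\lambda(2n_1+2,2n_2,\dots,2n_s)$ (and no Kronecker blocks).
   Context: For a finite-dimensional complex Lie algebra $\mathfrak g$ and $x\in\mathfrak g^*$, let $\mathcal A_x$ be the skew form $(\xi,\eta)\mapsto\langle x,[\xi,\eta]\rangle$. By the Jordan–Kronecker theorem, a pair of skew forms on a finite-dimensional complex vector space admits a basis in which both are block-diagonal with blocks of types: Jordan $2n\times2n$ blocks with eigenvalue $\mu\in\mathbb C\cup\{\infty\}$ ($A_i=\begin{pmatrix}0&J_\mu\\-J_\mu^T&0\end{pmatrix}$, $B_i=\begin{pmatrix}0&I_n\\-I_n&0\end{pmatrix}$), and Kronecker $(2k-1)\times(2k-1)$ blocks; block data grouped by eigenvalue are unique. The JK invariants of $\mathfrak g$ are the Kronecker sizes and Jordan tuples $J_{\lambda_i}(2n_{i1},\dots,2n_{is_i})$ (sizes of Jordan blocks with a common eigenvalue $\lambda_i$, in decreasing order) of $(\mathcal A_x,\mathcal A_a)$ for $(x,a)$ in a nonempty Zariski open subset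 of $\mathfrak g^*\times\mathfrak g^*$ where these are constant. *)

(* C is modelled as  R[i] = complex R  for an arbitrary
   R : realType (every realType is isomorphic to the reals). *)
From HB Require Import structures.
From mathcomp Require Import all_boot all_order all_algebra.
From mathcomp Require Import reals complex.
From mathcomp Require Import mpoly.
Set Implicit Arguments. Unset Strict Implicit. Unset Printing Implicit Defensive.
Import GRing.Theory Num.Theory.
Local Open Scope ring_scope.

(* Jor (Some mu) n : Jordan 2n x 2n block with eigenvalue mu;
   Jor None n      : Jordan 2n x 2n block with eigenvalue infinity;
   Kro k           : Kronecker (2k+1) x (2k+1) block (k >= 0). *)
Inductive jkblock (F : Type) := Jor of option F & nat | Kro of nat.

Section JK.
Variable F : fieldType.

Definition bsize (b : jkblock F) : nat :=
  match b with Jor _ n => n + n | Kro k => k + k.+1 end.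

Definition jblk (mu : F) (n : nat) : 'M[F]_n :=
  \matrix_(i, j) (if (i == j :> nat) then mu
                  else if (j == i.+1 :> nat) then 1 else 0).

Definition pairblk m k (M : 'M[F]_(m, k)) : 'M[F]_(m + k) :=
  block_mx 0 M (- M^T) 0.

Definition kro1 k : 'M[F]_(k, k.+1) := \matrix_(i, j) (i == j :> nat)%:R.
Definition kro2 k : 'M[F]_(k, k.+1) := \matrix_(i, j) (j == i.+1 :> nat)%:R.

Definition blockA (b : jkblock F) : 'M[F]_(bsize b) :=
  match b return 'M[F]_(bsize b) with
  | Jor (Some mu) n => pairblk (jblk mu n)
  | Jor None n => pairblk (1%:M : 'M[F]_n)
  | Kro k => pairblk (kro1 k)
  end.

Definition blockB (b : jkblock F) : 'M[F]_(bsize b) :=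
  match b return 'M[F]_(bsize b) with
  | Jor (Some mu) n => pairblk (1%:M : 'M[F]_n)
  | Jor None n => pairblk (jblk 0 n)
  | Kro k => pairblk (kro2 k)
  end.

Fixpoint jk_dim (s : seq (jkblock F)) : nat :=
  if s is b :: s' then bsize b + jk_dim s' else 0.

Fixpoint jkA (s : seq (jkblock F)) : 'M[F]_(jk_dim s) :=
  match s return 'M[F]_(jk_dim s) with
  | [::] => 0
  | b :: s' => block_mx (blockA b) 0 0 (jkA s')
  end.

Fixpoint jkB (s : seq (jkblock F)) : 'M[F]_(jk_dim s) :=
  match s return 'M[F]_(jk_dim s) with
  | [::] => 0
  | b :: s' => block_mx (blockB b) 0 0 (jkB s')
  end.

(* The pair of skew forms with Gram matrices (A, B) has JK decomposition
   given by the block list s: in some basis (rows of the invertible P)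
   both forms are simultaneously block diagonal with these blocks.
   (By uniqueness of the JK decomposition, this determines the JK data.) *)
Definition has_JK_form N (A B : 'M[F]_N) (s : seq (jkblock F)) : Prop :=
  exists e : jk_dim s = N, exists P : 'M[F]_N,
    [/\ P \in unitmx,
        P *m A *m P^T = castmx (e, e) (jkA s) &
        P *m B *m P^T = castmx (e, e) (jkB s)].

(* The single Jordan tuple  J_lam(2 n_1 + 2, 2 n_2, ..., 2 n_s). *)
Definition target_tuple (lam : option F) (ns : seq nat) : seq (jkblock F) :=
  match ns with
  | [::] => [::]
  | n1 :: rest => Jor lam n1.+1 :: map (Jor lam) rest
  end.

End JK.

(* ns = [:: n_1; ...; n_s], s = size ns.                              *)
(* Basis index type  bool * option {i : 'I_s & 'I_(n_i)} :            *)
(*   (true,  None)          = e_0        (false, None)          = f_0 *)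
(*   (true,  Some (i; j))   = e^i_{j+1}  (false, Some (i; j))   = f^i_{j+1} *)

Section Algebra.
Variable ns : seq nat.

Definition nn (i : 'I_(size ns)) : nat := nth 0%N ns i.
Definition lvlT := option {i : 'I_(size ns) & 'I_(nn i)}.
Definition gidx := (bool * lvlT)%type.

Definition lvl (u : lvlT) : nat :=
  if u is Some t then (tagged t).+1 else 0%N.

Definition onchain (i : 'I_(size ns)) (u : lvlT) : bool :=
  if u is Some t then tag t == i else true.

(* [e_u, f_v] has coefficient 1 on e_w:  e^i_j, f^i_k, 0 <= k <= j,
   and w = e^i_{j-k}. *)
Definition econd (u v w : lvlT) : bool :=
  [exists i, [&& onchain i u, onchain i v & onchain i w]] &&
  (lvl v <= lvl u)%N && (lvl w == lvl u - lvl v)%N.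

Variable F : fieldType.

(* structure constants: [b_p, b_q] = \sum_r cst p q r b_r *)
Definition cst (p q r : gidx) : F :=
  match p, q with
  | (true, u), (false, v) => if r.1 && econd u v r.2 then 1 else 0
  | (false, v), (true, u) => if r.1 && econd u v r.2 then -1 else 0
  | _, _ => 0
  end.

Definition lie_br (X Y : {ffun gidx -> F}) : {ffun gidx -> F} :=
  [ffun r => \sum_p \sum_q X p * Y q * cst p q r].

(* Gram matrix of A_x : (xi, eta) |-> <x, [xi, eta]> in the basis
   (b_p) enumerated by enum_val;  x given by its coordinates in the dual
   basis. *)
Definition Aform (x : {ffun gidx -> F}) : 'M[F]_#|{: gidx}| :=
  \matrix_(p, q) \sum_r x r * cst (enum_val p) (enum_val q) r.

(* the point (x, a) of g^* x g^* = F^(N + N) *)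
Definition gpt (x a : {ffun gidx -> F}) : 'I_(#|{: gidx}| + #|{: gidx}|) -> F :=
  fun k => match split k with
           | inl p => x (enum_val p)
           | inr q => a (enum_val q)
           end.

End Algebra.

(* Zariski open subsets of F^m : complements of common zero sets of a
   set S of polynomials, i.e. sets of the form {z | exists f in S, f(z) <> 0}. *)
Definition zariski_open (F : fieldType) (m : nat) (U : ('I_m -> F) -> Prop) :=
  exists S : {mpoly F[m]} -> bool,
    forall z, U z <-> exists f, S f /\ mpoly.meval z f != 0.

From HB Require Import structures.
From mathcomp Require Import all_boot all_order all_algebra.
From mathcomp Require Import reals complex.
From mathcomp Require Import mpoly.
From mathcomp Require Import ring zify.
Set Implicit Arguments. Unset Strict Implicit. Unset Printing Implicit Defensive.
Import GRing.Theory Num.Theory.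
Local Open Scope ring_scope.

(* The f's span the commutative algebra
     A = F[t_1, ..., t_s] / (t_i t_j (i <> j), t_i ^ (n_i + 1)),
   the e's span its dual, and [e_u, f_v] is the action of f_v on e_u; so g is the
   semidirect product of A with its coregular representation, a Lie algebra since
   A is commutative and associative.  A_x only pairs the dual of A with A, by
   (phi, b) |-> phi (X b) where X is the e-part of x, so the pencil (A_x, A_a) is
   governed by multiplication by X and Y.  When Y(1) <> 0, X = lam Y + W with W
   nilpotent, and when W has a nonzero t_i-coefficient for every i, the elements
   Y ^ (n_1 - d) W_i ^ d (W_i the part of W on chain i, W itself on the first
   chain) form a basis of A on which W acts as Y times a shift along Jordan chains
   of lengths n_1 + 1, n_2, ..., n_s.  Together with the dual basis this gives a
   simultaneous Jordan basis of A_x and A_a with eigenvalue lam.  Both genericity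
   conditions say that one polynomial in (x, a) does not vanish. *)

Section ChainAlgebra.
Variables (n1 : nat) (rest : seq nat).
Local Notation ns := (n1 :: rest).
Local Notation T := (lvlT ns).
Local Notation I := ('I_(size ns)).

(* Out of range ([d > nn i]), [node i d] is the junk value [None], the root. *)
Definition node (i : I) (d : nat) : T :=
  if d is d'.+1 then omap (@Tagged I i (fun j : I => 'I_(nn j))) (insub d') else None.

(* The root lies on every chain; [chain_of] assigns it to the first one. *)
Definition chain_of (u : T) : I := if u is Some t then tag t else ord0.

Lemma lvl_node i d : (d <= nn i)%N -> lvl (node i d) = d.
Proof. by case: d => [|d] //= hd; rewrite insubT. Qed.

Lemma onchain_node i d : onchain i (node i d).
Proof. by case: d => [|d] //=; case: insubP => //= k _ _ /=. Qed.

Lemma chain_of_node i d : (0 < d <= nn i)%N -> chain_of (node i d) = i.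
Proof. by case: d => // d /= hd; rewrite insubT. Qed.

Lemma chain_of_node0 d : chain_of (node ord0 d) = ord0 :> I.
Proof. by case: d => //= d; case: insubP. Qed.

Lemma lvl_eq0 (u : T) : (lvl u == 0%N) = (u == None).
Proof. by case: u. Qed.

Lemma node_chain_of (u : T) : node (chain_of u) (lvl u) = u.
Proof. by case: u => [[i k]|] //=; rewrite valK. Qed.

Lemma lvl_le_chain (u : T) : (lvl u <= nn (chain_of u))%N.
Proof. by case: u => [[i k]|] //=. Qed.

Lemma eq_node i d (v : T) : (d <= nn i)%N -> (v == node i d) = onchain i v && (lvl v == d).
Proof.
move=> hd; apply/eqP/andP => [->|[hv /eqP hl]]; first by rewrite onchain_node lvl_node.
case: v hv hl => [[i' k]|] /= hv hl; last by rewrite -hl.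
by move/eqP: hv => hv; subst i' d => /=; rewrite valK.
Qed.

Lemma econd_node i d (v w : T) : (d <= nn i)%N ->
  econd (node i d) v w = [&& onchain i v, onchain i w, lvl v <= d & lvl w == d - lvl v]%N.
Proof.
move=> hd; rewrite /econd lvl_node //.
have [->|d_gt0] := posnP d.
  rewrite leqn0 sub0n !lvl_eq0.
  case: v w => [?|] [?|] /=; rewrite ?andbF ?andbT //.
  by apply/existsP; exists ord0.
suff -> : [exists j, [&& onchain j (node i d), onchain j v & onchain j w]] =
          onchain i v && onchain i w by rewrite -!andbA.
have [t -> /eqP <-] : exists2 t, node i d = Some t & tag t == i.
  case: d hd d_gt0 => // d hd _; rewrite /= insubT /=.
  by exists (Tagged (fun j : I => 'I_(nn j)) (Ordinal hd)).
apply/existsP/idP => [[j /and3P[/eqP <- -> ->]] //|/andP[hv hw]].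
by exists (tag t); rewrite /= eqxx hv hw.
Qed.

Section Algebra.
Variable F : fieldType.

Lemma sum_delta (f : T -> F) x : \sum_v f v * (v == x)%:R = f x.
Proof.
rewrite (bigD1 x) //= eqxx mulr1 big1 ?addr0 // => v /negbTE ->.
by rewrite mulr0.
Qed.

Lemma sum_ord_eq_and (k n : nat) (P : pred nat) :
  \sum_(j < n) ((k == j) && P j)%:R = (((k < n)%N && P k)%:R : F).
Proof.
case: (ltnP k n) => [lt_kn|le_nk].
  rewrite (bigD1 (Ordinal lt_kn)) //= eqxx big1 ?addr0 // => j.
  by rewrite -val_eqE eq_sym => /negbTE ->.
by rewrite big1 // => j _; rewrite gtn_eqF // (leq_trans (ltn_ord j)).
Qed.

Lemma econd_node_sum i d (v w : T) : (d <= nn i)%N ->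
  (econd (node i d) v w)%:R =
  \sum_(j < d.+1) ((v == node i j) && (w == node i (d - j)))%:R :> F.
Proof.
move=> hd; rewrite econd_node //.
have hj (j : 'I_d.+1) : (j <= nn i)%N by rewrite (leq_trans _ hd) // -ltnS.
have hdj (j : 'I_d.+1) : (d - j <= nn i)%N by rewrite (leq_trans (leq_subr _ _) hd).
transitivity (\sum_(j < d.+1)
    ((lvl v == j) && [&& onchain i v, onchain i w & lvl w == d - j]%N)%:R : F).
  rewrite (sum_ord_eq_and _ _ (fun j => [&& onchain i v, onchain i w & lvl w == d - j]%N)).
  rewrite ltnS; congr (_ %:R).
  by case: (onchain i v); case: (onchain i w); case: (lvl v <= d)%N.
apply: eq_bigr => j _; rewrite !eq_node //; congr (_ %:R).
by case: (onchain i v); case: (onchain i w); case: (lvl v == j).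
Qed.

Definition chain_mul (a b : {ffun T -> F}) : {ffun T -> F} :=
  [ffun u => \sum_v \sum_w a v * b w * (econd u v w)%:R].
Definition chain_one : {ffun T -> F} := [ffun u => (u == None)%:R].

Lemma chain_mul_node a b i d : (d <= nn i)%N ->
  chain_mul a b (node i d) = \sum_(j < d.+1) a (node i j) * b (node i (d - j)).
Proof.
move=> hd; rewrite ffunE.
under eq_bigr do under eq_bigr do rewrite econd_node_sum // mulr_sumr.
under eq_bigr do rewrite exchange_big /=.
rewrite exchange_big /=; apply: eq_bigr => j _.
under eq_bigr do under eq_bigr do rewrite -mulnb natrM mulrA.
by under eq_bigr do rewrite sum_delta; rewrite sum_delta.
Qed.

Definition chain_poly i (a : {ffun T -> F}) : {poly F} := \poly_(d < (nn i).+1) a (node i d).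

Lemma coef_chain_poly i a d : (d <= nn i)%N -> (chain_poly i a)`_d = a (node i d).
Proof. by rewrite coef_poly ltnS => ->. Qed.

Lemma chain_mul_coef a b i d : (d <= nn i)%N ->
  chain_mul a b (node i d) = (chain_poly i a * chain_poly i b)`_d.
Proof.
move=> hd; rewrite chain_mul_node // coefM; apply: eq_bigr => j _.
have le_jd : (j <= d)%N := ltn_ord j.
by rewrite !coef_chain_poly // (leq_trans _ hd) // leq_subr.
Qed.

Lemma chain_ffunP (a b : {ffun T -> F}) :
  (forall i d, (d <= nn i)%N -> a (node i d) = b (node i d)) -> a = b.
Proof.
by move=> h; apply/ffunP => u; rewrite -(node_chain_of u); apply: h; exact: lvl_le_chain.
Qed.

Lemma coefM_low (p p' q q' : {poly F}) d :
  (forall j, (j <= d)%N -> p`_j = p'`_j /\ q`_j = q'`_j) -> (p * q)`_d = (p' * q')`_d.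
Proof.
move=> h; rewrite !coefM; apply: eq_bigr => j _.
have le_jd : (j <= d)%N := ltn_ord j.
by rewrite (h j le_jd).1 (h (d - j)%N (leq_subr _ _)).2.
Qed.

Lemma chain_mulA : associative chain_mul.
Proof.
move=> a b c; apply: chain_ffunP => i d hd; rewrite !chain_mul_coef //.
have coef_mul x y j : (j <= d)%N ->
    (chain_poly i (chain_mul x y))`_j = (chain_poly i x * chain_poly i y)`_j.
  by move=> le_jd; have le_ji := leq_trans le_jd hd; rewrite coef_chain_poly // chain_mul_coef.
rewrite (@coefM_low _ (chain_poly i a) _ (chain_poly i b * chain_poly i c)); last first.
  by move=> j le_jd; split; last exact: coef_mul.
by rewrite mulrA; apply: coefM_low => j le_jd; rewrite coef_mul.
Qed.

Lemma chain_mulC : commutative chain_mul.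
Proof. by move=> a b; apply: chain_ffunP => i d hd; rewrite !chain_mul_coef // mulrC. Qed.

Lemma chain_poly_one i : chain_poly i chain_one = 1.
Proof.
apply/polyP => d; rewrite coef_poly coef1.
by case: ltnP => [hd|]; [rewrite ffunE -lvl_eq0 lvl_node | case: d].
Qed.

Lemma chain_mul1 : left_id chain_one chain_mul.
Proof.
move=> a; apply: chain_ffunP => i d hd.
by rewrite chain_mul_coef // chain_poly_one mul1r coef_chain_poly.
Qed.

Lemma chain_polyD i a b : chain_poly i (a + b) = chain_poly i a + chain_poly i b.
Proof. by apply/polyP => d; rewrite coefD !coef_poly; case: ifP; rewrite ?ffunE ?addr0. Qed.

Lemma chain_mulDl : left_distributive chain_mul +%R.
Proof.
move=> a b c; apply: chain_ffunP => i d hd.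
by rewrite [RHS]ffunE !chain_mul_coef // chain_polyD mulrDl coefD.
Qed.

Lemma chain_one_neq0 : chain_one != 0.
Proof. by apply/eqP => /ffunP /(_ None); rewrite !ffunE eqxx => /eqP; rewrite oner_eq0. Qed.

(* The span of the f's, with [f_v f_w = f_u] whenever [[e_u, f_v] = e_w]:
   F[t_1, ..., t_s] / (t_i t_j (i <> j), t_i ^ (n_i + 1)) with f^i_j = t_i ^ j. *)
Definition chain_alg := {ffun T -> F}.
HB.instance Definition _ := GRing.Zmodule.on chain_alg.
HB.instance Definition _ := GRing.Zmodule_isComNzRing.Build chain_alg
  chain_mulA chain_mulC chain_mul1 chain_mulDl chain_one_neq0.

Lemma chain_alg_mulE (a b : chain_alg) i d : (d <= nn i)%N ->
  (a * b) (node i d) = \sum_(j < d.+1) a (node i j) * b (node i (d - j)).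
Proof. exact: chain_mul_node. Qed.

Lemma chain_algBE (a b : chain_alg) u : (a - b) u = a u - b u.
Proof. by rewrite !ffunE. Qed.

End Algebra.
End ChainAlgebra.

Section LieBracket.
Variables (n1 : nat) (rest : seq nat) (F : fieldType).
Local Notation ns := (n1 :: rest).
Local Notation T := (lvlT ns).
Local Notation G := (gidx ns).
Local Notation A := (chain_alg n1 rest F).

Definition ecoord (X : {ffun G -> F}) : A := [ffun u => X (true, u)].
Definition fcoord (X : {ffun G -> F}) : A := [ffun u => X (false, u)].

Lemma ecoordE X u : ecoord X u = X (true, u). Proof. exact: ffunE. Qed.

Definition dot (phi b : A) : F := \sum_u phi u * b u.

Lemma dotDr phi (a b : A) : dot phi (a + b) = dot phi a + dot phi b.
Proof. by rewrite /dot -big_split; apply: eq_bigr => u _; rewrite ffunE mulrDr. Qed.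

Lemma dot0r phi : dot phi 0 = 0.
Proof. by rewrite /dot big1 // => u _; rewrite ffunE mulr0. Qed.

Definition delta (w : T) : A := [ffun u => (u == w)%:R].

(* The span of the e's, viewed as the dual of [A], with [b] acting by
   [phi |-> phi (b * _)]. *)
Definition coact (b phi : A) : A := [ffun w => \sum_u \sum_v phi u * b v * (econd u v w)%:R].

Lemma big_gidx (f : G -> F) : \sum_p f p = \sum_u f (true, u) + \sum_u f (false, u).
Proof.
rewrite (eq_bigr (fun p => f (p.1, p.2))); last by case.
by rewrite -(pair_bigA _ (fun b u => f (b, u))) big_bool.
Qed.

Lemma lie_brE (X Y : {ffun G -> F}) b w : lie_br X Y (b, w) =
  if b then coact (fcoord Y) (ecoord X) w - coact (fcoord X) (ecoord Y) w else 0.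
Proof.
rewrite ffunE big_gidx.
have -> : \sum_u \sum_q X (true, u) * Y q * cst F (true, u) q (b, w) =
          \sum_u \sum_v ecoord X u * fcoord Y v * (b && econd u v w)%:R.
  apply: eq_bigr => u _; rewrite big_gidx [X in X + _]big1 ?add0r => [|v _].
    by apply: eq_bigr => v _; rewrite !ffunE /cst /=; case: (_ && _).
  by rewrite /cst mulr0.
have -> : \sum_u \sum_q X (false, u) * Y q * cst F (false, u) q (b, w) =
          - \sum_u \sum_v ecoord Y u * fcoord X v * (b && econd u v w)%:R.
  transitivity (\sum_u \sum_v X (false, u) * Y (true, v) * - (b && econd v u w)%:R).
    apply: eq_bigr => u _; rewrite big_gidx [X in _ + X]big1 ?addr0 => [|v _].
      by apply: eq_bigr => v _; rewrite /cst /=; case: (_ && _); rewrite ?oppr0.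
    by rewrite /cst mulr0.
  rewrite exchange_big -sumrN; apply: eq_bigr => v _; rewrite -sumrN.
  by apply: eq_bigr => u _; rewrite !ffunE mulrN [X _ * _]mulrC.
case: b; first by rewrite !ffunE.
by rewrite !big1 ?oppr0 ?addr0 // => u _; rewrite big1 // => v _; rewrite mulr0.
Qed.

Lemma coact_delta b phi w : coact b phi w = dot phi (b * delta w).
Proof.
rewrite ffunE; apply: eq_bigr => u _; rewrite ffunE mulr_sumr; apply: eq_bigr => v _.
rewrite (bigD1 w) //= !ffunE eqxx mulr1 big1 ?addr0 ?mulrA // => w' /negbTE hw.
by rewrite ffunE hw mulr0 mul0r.
Qed.

Lemma mul_delta_sum (b g : A) u : (b * g) u = \sum_w (b * delta w) u * g w.
Proof.
rewrite ffunE exchange_big /=; apply: eq_bigr => w _.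
rewrite ffunE mulr_suml; apply: eq_bigr => v _.
rewrite (bigD1 w) //= !ffunE eqxx mulr1 big1 ?addr0; first by rewrite mulrAC.
by move=> w' /negbTE hw; rewrite ffunE hw !mulr0 mul0r.
Qed.

Lemma coactM a b phi w : coact a (coact b phi) w = dot phi (b * (a * delta w)).
Proof.
rewrite coact_delta /dot.
under eq_bigr => u _ do rewrite coact_delta mulr_suml.
rewrite exchange_big /=; apply: eq_bigr => u' _.
by rewrite mul_delta_sum mulr_sumr; apply: eq_bigr => u _; rewrite mulrA.
Qed.

Lemma coactC a b phi : coact a (coact b phi) = coact b (coact a phi).
Proof. by apply/ffunP => w; rewrite !coactM mulrCA. Qed.

Lemma coact0l phi : coact 0 phi = 0.
Proof.
apply/ffunP => w; rewrite !ffunE big1 // => u _.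
by rewrite big1 // => v _; rewrite ffunE mulr0 mul0r.
Qed.

Lemma coactBr b phi psi : coact b (phi - psi) = coact b phi - coact b psi.
Proof.
apply/ffunP => w; rewrite !ffunE -sumrB; apply: eq_bigr => u _.
by rewrite -sumrB; apply: eq_bigr => v _; rewrite !ffunE !mulrBl.
Qed.

Lemma lie_br_nested (X Y Z : {ffun G -> F}) w :
  lie_br X (lie_br Y Z) (true, w) =
  coact (fcoord X) (coact (fcoord Y) (ecoord Z)) w -
  coact (fcoord X) (coact (fcoord Z) (ecoord Y)) w.
Proof.
rewrite lie_brE.
have -> : fcoord (lie_br Y Z) = 0 by apply/ffunP => u; rewrite [LHS]ffunE lie_brE ffunE.
have -> : ecoord (lie_br Y Z) = coact (fcoord Z) (ecoord Y) - coact (fcoord Y) (ecoord Z).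
  by apply/ffunP => u; rewrite [LHS]ffunE lie_brE !ffunE.
by rewrite coact0l coactBr !ffunE sub0r opprB.
Qed.

Lemma lie_br_alt (X : {ffun G -> F}) : lie_br X X = 0.
Proof. by apply/ffunP => -[[] w]; rewrite lie_brE [RHS]ffunE ?subrr. Qed.

Lemma lie_br_jacobi (X Y Z : {ffun G -> F}) :
  lie_br X (lie_br Y Z) + lie_br Y (lie_br Z X) + lie_br Z (lie_br X Y) = 0.
Proof.
have addE (f g : {ffun G -> F}) p : (f + g) p = f p + g p by rewrite ffunE.
apply/ffunP => -[[] w]; rewrite !addE [RHS]ffunE; last by rewrite !lie_brE !addr0.
rewrite !lie_br_nested (coactC (fcoord X) (fcoord Y)) (coactC (fcoord X) (fcoord Z)).
rewrite (coactC (fcoord Y) (fcoord Z)).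
ring.
Qed.

End LieBracket.

Section SkewForms.
Variables (F : fieldType) (N : nat).

Definition bform (M : 'M[F]_N) (u v : 'rV[F]_N) : F := (u *m M *m v^T) 0 0.

Lemma form_mxE m1 m2 (U : 'M[F]_(m1, N)) (V : 'M_(m2, N)) M k l :
  (U *m M *m V^T) k l = bform M (row k U) (row l V).
Proof.
rewrite /bform !mxE; apply: eq_bigr => c _; rewrite !mxE; congr (_ * _).
by apply: eq_bigr => d _; rewrite !mxE.
Qed.

Lemma row_rV (u : 'rV[F]_N) : row 0 u = u.
Proof. by apply/rowP => i; rewrite mxE. Qed.

Lemma form_tr m1 m2 (U : 'M[F]_(m1, N)) (V : 'M_(m2, N)) M :
  M^T = - M -> V *m M *m U^T = - (U *m M *m V^T)^T.
Proof. by move=> skew; rewrite !trmx_mul trmxK skew mulNmx mulmxN opprK mulmxA. Qed.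

Lemma bform_skew M u v : M^T = - M -> bform M v u = - bform M u v.
Proof. by move=> skew; rewrite /bform form_tr // !mxE. Qed.

Lemma form_col_mx m1 m2 (U : 'M[F]_(m1, N)) (V : 'M_(m2, N)) M :
  col_mx U V *m M *m (col_mx U V)^T =
  block_mx (U *m M *m U^T) (U *m M *m V^T) (V *m M *m U^T) (V *m M *m V^T).
Proof. by rewrite tr_col_mx mul_col_mx mul_col_row. Qed.

Definition mx_of_rows m (V : nat -> 'rV[F]_N) : 'M[F]_(m, N) := \matrix_(p < m, c < N) V p 0 c.

Lemma row_mx_of_rows m V (k : 'I_m) : row k (mx_of_rows m V) = V k.
Proof. by apply/rowP => c; rewrite !mxE. Qed.

Lemma castmx_form n (e : n = N) (P : 'M[F]_(n, N)) (M : 'M_N) :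
  castmx (e, erefl N) P *m M *m (castmx (e, erefl N) P)^T = castmx (e, e) (P *m M *m P^T).
Proof. by move: M P; case: N / e => M P; rewrite !castmx_id. Qed.

Lemma castmx_unit n (e : n = N) (J : 'M[F]_n) : J \in unitmx -> castmx (e, e) J \in unitmx.
Proof. by case: N / e; rewrite castmx_id. Qed.

End SkewForms.

Section JordanTable.
Variables (F : fieldType) (N : nat) (lam : F).
Local Notation jordan_blocks ms := (map (Jor (Some lam)) ms).

Definition jordan_entry (p q : nat) : F := if p == q then lam else (q == p.+1)%:R.

Fixpoint table_mx ms (VE VF : nat -> nat -> 'rV[F]_N) : 'M[F]_(jk_dim (jordan_blocks ms), N) :=
  match ms return 'M_(jk_dim (jordan_blocks ms), N) with
  | [::] => 0
  | m :: ms' => col_mx (col_mx (mx_of_rows m (VE 0%N)) (mx_of_rows m (VF 0%N)))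
                       (table_mx ms' (fun j => VE j.+1) (fun j => VF j.+1))
  end.

Fixpoint pair_diag ms (c : nat -> nat -> nat -> F) : 'M[F]_(jk_dim (jordan_blocks ms)) :=
  match ms return 'M_(jk_dim (jordan_blocks ms)) with
  | [::] => 0
  | m :: ms' => block_mx (pairblk (\matrix_(p < m, q < m) c 0%N p q)) 0 0
                         (pair_diag ms' (fun j => c j.+1))
  end.

Lemma jkA_pair_diag ms : jkA (jordan_blocks ms) = pair_diag ms (fun _ => jordan_entry).
Proof.
elim: ms => //= m ms ->; congr (block_mx (pairblk _) _ _ _).
by apply/matrixP => p q; rewrite !mxE /jordan_entry; case: eqP => // _; case: eqP.
Qed.

Lemma jkB_pair_diag ms : jkB (jordan_blocks ms) = pair_diag ms (fun _ p q => (p == q)%:R).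
Proof.
elim: ms => //= m ms ->; congr (block_mx (pairblk _) _ _ _).
by apply/matrixP => p q; rewrite !mxE.
Qed.

Definition pairing_table (M : 'M[F]_N) ms (c : nat -> nat -> nat -> F)
    (VE VF : nat -> nat -> 'rV[F]_N) :=
  forall j j' p q, (j < size ms)%N -> (j' < size ms)%N ->
    (p < nth 0%N ms j)%N -> (q < nth 0%N ms j')%N ->
  [/\ bform M (VE j p) (VE j' q) = 0, bform M (VF j p) (VF j' q) = 0 &
      bform M (VE j p) (VF j' q) = if j == j' then c j p q else 0].

Lemma table_mx_orth M ms (VE VF : nat -> nat -> 'rV[F]_N) u :
  (forall j p, (j < size ms)%N -> (p < nth 0%N ms j)%N ->
     bform M u (VE j p) = 0 /\ bform M u (VF j p) = 0) ->
  u *m M *m (table_mx ms VE VF)^T = 0.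
Proof.
elim: ms VE VF => [|m ms IH] VE VF h; first by apply/matrixP => ? [].
apply/rowP => l; rewrite form_mxE row_rV mxE.
case: (split_ordP l) => {}l ->; last first.
  rewrite rowKd; have := IH (fun j => VE j.+1) (fun j => VF j.+1) (fun j => h j.+1).
  by move/matrixP/(_ 0 l); rewrite form_mxE row_rV mxE.
by case: (split_ordP l) => p ->; rewrite ?rowKu ?rowKd row_mx_of_rows;
  have [] := h 0%N p isT (ltn_ord p).
Qed.

Lemma table_form M ms c VE VF : M^T = - M -> pairing_table M ms c VE VF ->
  table_mx ms VE VF *m M *m (table_mx ms VE VF)^T = pair_diag ms c.
Proof.
move=> skew; elim: ms c VE VF => [|m ms IH] c VE VF h /=; first by apply/matrixP => -[].
set PE := mx_of_rows m (VE 0%N); set PF := mx_of_rows m (VF 0%N).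
have head_rows (k : 'I_(m + m)) : exists2 p, (p < m)%N &
    row k (col_mx PE PF) = VE 0%N p \/ row k (col_mx PE PF) = VF 0%N p.
  by case: (split_ordP k) => p ->; exists p => //;
    rewrite ?rowKu ?rowKd /PE /PF row_mx_of_rows; auto.
have cross : col_mx PE PF *m M *m (table_mx ms (fun j => VE j.+1) (fun j => VF j.+1))^T = 0.
  apply/row_matrixP => k; rewrite !row_mul row0; apply: table_mx_orth => j q hj hq.
  have [p hp [->|->]] := head_rows k.
    by have [-> _ ->] := h 0%N j.+1 p q isT hj hp hq.
  have [_ FF _] := h 0%N j.+1 p q isT hj hp hq.
  have [_ _ EF] := h j.+1 0%N q p hj isT hq hp.
  by rewrite FF bform_skew // EF oppr0.
have blk00 (p q : 'I_m) := h 0%N 0%N p q isT isT (ltn_ord p) (ltn_ord q).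
have cross' : table_mx ms (fun j => VE j.+1) (fun j => VF j.+1) *m M *m (col_mx PE PF)^T = 0.
  by rewrite form_tr // cross trmx0 oppr0.
rewrite form_col_mx cross cross' (IH (fun j => c j.+1)); last first.
  by move=> j j' p q; apply: (h j.+1 j'.+1).
rewrite form_col_mx (form_tr PE PF skew); congr (block_mx (block_mx _ _ (- _^T) _) 0 0 _);
  apply/matrixP => p q; rewrite form_mxE /PE /PF !row_mx_of_rows !mxE;
  by have [EE FF EF] := blk00 p q; rewrite ?EE ?FF ?EF.
Qed.

Lemma jkB_unit ms : jkB (jordan_blocks ms) \in unitmx.
Proof.
suff sqr : jkB (jordan_blocks ms) *m - jkB (jordan_blocks ms) = 1%:M by case/mulmx1_unit: sqr.
rewrite mulmxN; apply: oppr_inj; rewrite opprK.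
elim: ms => [|m ms IH]; first by apply/matrixP => -[].
rewrite /= /pairblk !mulmx_block IH !mul0mx !mulmx0 !mul1mx !mulmx1 trmx1 !addr0 !add0r.
rewrite [in RHS](scalar_mx_block (m + m) _ 1) (scalar_mx_block m m 1).
by rewrite !opp_block_mx !oppr0.
Qed.

Lemma has_JK_form_of_tables (A B : 'M[F]_N) ms VE VF :
  A^T = - A -> B^T = - B ->
  pairing_table A ms (fun _ => jordan_entry) VE VF ->
  pairing_table B ms (fun _ p q => (p == q)%:R) VE VF ->
  jk_dim (jordan_blocks ms) = N -> has_JK_form A B (jordan_blocks ms).
Proof.
move=> skewA skewB tabA tabB e.
have PA := table_form skewA tabA; have PB := table_form skewB tabB.
rewrite -jkA_pair_diag in PA; rewrite -jkB_pair_diag in PB.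
exists e, (castmx (e, erefl N) (table_mx ms VE VF)); rewrite !castmx_form PA PB; split => //.
have : castmx (e, erefl N) (table_mx ms VE VF) *m B *m (castmx (e, erefl N) (table_mx ms VE VF))^T
         \in unitmx by rewrite castmx_form PB castmx_unit ?jkB_unit.
by rewrite !unitmx_mul => /andP[/andP[]].
Qed.

End JordanTable.

Section Valuation.
Variables (F : fieldType) (n1 : nat) (rest : seq nat).
Local Notation A := (chain_alg n1 rest F).

Lemma mul_root (a b : A) : (a * b) None = a None * b None.
Proof. by rewrite (@chain_alg_mulE _ _ _ a b ord0 0 (leq0n _)) big_ord1. Qed.

Lemma exp_root (a : A) e : (a ^+ e) None = a None ^+ e.
Proof. by elim: e => [|e IH]; rewrite ?ffunE // !exprS mul_root IH. Qed.

Definition vanishes_below (a : A) i m := forall l, (l < m)%N -> (l <= nn i)%N -> a (node i l) = 0.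

Lemma vanishes_below0 (a : A) i : vanishes_below a i 0.
Proof. by []. Qed.

Lemma vanishes_below_mul (a b : A) i m k :
  vanishes_below a i m -> vanishes_below b i k -> vanishes_below (a * b) i (m + k).
Proof.
move=> ha hb d hd di; rewrite chain_alg_mulE // big1 // => j _.
have le_jd : (j <= d)%N := ltn_ord j.
case: (ltnP j m) => [lt_jm|le_mj]; first by rewrite ha ?mul0r // (leq_trans le_jd di).
rewrite hb ?mulr0 //; last by rewrite (leq_trans (leq_subr _ _) di).
by rewrite ltn_subLR // (leq_trans hd) // leq_add2r.
Qed.

Lemma mul_node_lead (a b : A) i m k :
  vanishes_below a i m -> vanishes_below b i k -> (m + k <= nn i)%N ->
  (a * b) (node i (m + k)) = a (node i m) * b (node i k).
Proof.
move=> ha hb hd; rewrite chain_alg_mulE //.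
have lt_m : (m < (m + k).+1)%N by rewrite ltnS leq_addr.
rewrite (bigD1 (Ordinal lt_m)) //= addKn big1 ?addr0 // => j; rewrite -val_eqE /= => ne_jm.
have le_j : (j <= m + k)%N := ltn_ord j.
case: (ltngtP j m) ne_jm => // [lt_jm|lt_mj] _; first by rewrite ha ?mul0r // (leq_trans le_j hd).
rewrite hb ?mulr0 //; last by rewrite (leq_trans (leq_subr _ _) hd).
by rewrite ltn_subLR // ltn_add2r.
Qed.

Section NoConstantTerm.
Variable g : A.
Hypothesis g_root : g None = 0.

Lemma vanishes_below1 i : vanishes_below g i 1.
Proof. by move=> l; rewrite ltnS leqn0 => /eqP -> _. Qed.

Lemma exp_vanishes_below i n : vanishes_below (g ^+ n) i n.
Proof.
elim: n => [|n IH] //.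
by have := vanishes_below_mul (@vanishes_below1 i) IH; rewrite add1n -exprS.
Qed.

Lemma exp_node_lead i n : (n <= nn i)%N -> (g ^+ n) (node i n) = g (node i 1) ^+ n.
Proof.
elim: n => [|n IH] hn; first by rewrite !expr0 ffunE.
rewrite exprS -add1n (mul_node_lead (@vanishes_below1 i) (@exp_vanishes_below i n)) add1n //.
by rewrite IH 1?ltnW // exprS.
Qed.

End NoConstantTerm.

Definition cst_alg (c : F) : A := [ffun u => (u == None)%:R * c].

Lemma mul_cst_alg c (g : A) u : (cst_alg c * g) u = c * g u.
Proof.
rewrite -(node_chain_of u) chain_alg_mulE ?lvl_le_chain // big_ord_recl subn0 ffunE eqxx mul1r.
rewrite big1 ?addr0 // => j _; rewrite ffunE -lvl_eq0 lvl_node ?mul0r //.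
by rewrite (leq_trans _ (lvl_le_chain u)) // (ltn_ord j).
Qed.

Lemma dot_cst_alg phi c (g : A) : dot phi (cst_alg c * g) = c * dot phi g.
Proof. by rewrite /dot mulr_sumr; apply: eq_bigr => u _; rewrite mul_cst_alg mulrCA. Qed.

End Valuation.

Arguments cst_alg {F n1 rest}.

Section JordanBasis.
Variables (F : fieldType) (n1 : nat) (rest : seq nat).
Local Notation ns := (n1 :: rest).
Local Notation T := (lvlT ns).
Local Notation I := ('I_(size ns)).
Local Notation A := (chain_alg n1 rest F).
Hypothesis ns_sorted : sorted geq ns.
Hypothesis ns_pos : all (fun k => 0 < k)%N ns.

Lemma nn_le_head (j : I) : (nn j <= n1)%N.
Proof.
have head_max : all (geq n1) rest.
  by apply: (order_path_min (leT := geq)) => // a b c ba cb; exact: leq_trans cb ba.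
case: j => [[|j] lt_j] //; rewrite /nn /=.
by apply: (allP head_max); apply: mem_nth; rewrite -ltnS.
Qed.

Lemma nn_gt0 (j : I) : (0 < nn j)%N.
Proof. exact: (all_nthP 0%N ns_pos) j (ltn_ord j). Qed.

Variables (X Y : A).
Hypothesis Y_root : Y None != 0.

Definition eigen := X None / Y None.
Definition nilpart : A := X - cst_alg eigen * Y.

Lemma nilpart_root : nilpart None = 0.
Proof. by rewrite chain_algBE mul_cst_alg /eigen divfK // subrr. Qed.

Definition chain_part (i : I) : A :=
  [ffun u => if (u != None) && (chain_of u == i) then nilpart u else 0].

Lemma chain_part_root i : chain_part i None = 0.
Proof. by rewrite ffunE. Qed.

Lemma chain_part_node i j d : (d <= nn j)%N ->
  chain_part i (node j d) = if (j == i) && (0 < d)%N then nilpart (node j d) else 0.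
Proof.
case: d => [|d] hd; first by rewrite chain_part_root andbF.
by rewrite ffunE -lvl_eq0 lvl_node // chain_of_node //= andbT.
Qed.

Lemma chain_part_exp_off i j e n : j != i -> (0 < n)%N -> (e <= nn j)%N ->
  (chain_part i ^+ n) (node j e) = 0.
Proof.
move=> ne_ji; case: n => // n _ he; rewrite exprS chain_alg_mulE // big1 // => l _.
by rewrite chain_part_node ?(negbTE ne_ji) ?mul0r // (leq_trans _ he) // -ltnS.
Qed.

Lemma nilpart_mul_chain_part i n : (0 < n)%N -> nilpart * chain_part i ^+ n = chain_part i ^+ n.+1.
Proof.
move=> n_gt0; apply: chain_ffunP => j d hd; rewrite exprS !chain_alg_mulE //.
apply: eq_bigr => l _; have hl : (l <= nn j)%N by rewrite (leq_trans _ hd) // -ltnS.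
have [eq_ji|ne_ji] := eqVneq j i; last first.
  by rewrite chain_part_exp_off ?mulr0 // (leq_trans (leq_subr _ _) hd).
subst j; rewrite chain_part_node // eqxx /=; case: posnP => [->|_] //=.
by rewrite nilpart_root !mul0r.
Qed.

Lemma chain_part_nilpotent i : chain_part i ^+ (nn i).+1 = 0.
Proof.
apply: chain_ffunP => j d hd; rewrite ffunE.
have [eq_ji|ne_ji] := eqVneq j i; last by rewrite chain_part_exp_off.
by subst j; apply: (exp_vanishes_below (chain_part_root i)); rewrite ?ltnS.
Qed.

Lemma nilpart_nilpotent : nilpart ^+ n1.+1 = 0.
Proof.
apply: chain_ffunP => j d hd; rewrite ffunE; apply: (exp_vanishes_below nilpart_root) => //.
by rewrite ltnS (leq_trans hd) ?nn_le_head.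
Qed.

(* The first (longest) chain also carries the root, hence uses [nilpart] itself. *)
Definition chain_gen (j : I) : A := if j == ord0 then nilpart else chain_part j.

Lemma chain_gen_root j : chain_gen j None = 0.
Proof. by rewrite /chain_gen; case: ifP => _; rewrite ?nilpart_root ?chain_part_root. Qed.

Lemma chain_gen_node1 c i :
  chain_gen c (node i 1) = if (c == ord0) || (i == c) then nilpart (node i 1) else 0.
Proof. by rewrite /chain_gen; case: ifP => // _; rewrite chain_part_node ?nn_gt0 ?andbT. Qed.

Lemma chain_gen_nilpotent c : chain_gen c ^+ (nn c).+1 = 0.
Proof.
rewrite /chain_gen; case: eqP => [->|_]; last exact: chain_part_nilpotent.
by rewrite nilpart_nilpotent.
Qed.

Lemma nilpart_mul_chain_gen u :
  nilpart * chain_gen (chain_of u) ^+ lvl u = chain_gen (chain_of u) ^+ (lvl u).+1.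
Proof.
case: u => [t|]; rewrite /chain_gen /=; last by rewrite ?eqxx expr0 mulr1 expr1.
by case: eqP => _; [rewrite [RHS]exprS | rewrite nilpart_mul_chain_part].
Qed.

(* Up to the unit [Y ^+ n1], the basis element of level [d] on chain [c] is
   [(chain_gen c / Y) ^+ d]; multiplying by [nilpart / Y] moves one step up the chain. *)
Definition jbasis (u : T) : A := Y ^+ (n1 - lvl u) * chain_gen (chain_of u) ^+ lvl u.

Lemma nilpart_mul_jbasis u : nilpart * jbasis u =
  if (lvl u < nn (chain_of u))%N then Y * jbasis (node (chain_of u) (lvl u).+1) else 0.
Proof.
rewrite /jbasis mulrCA nilpart_mul_chain_gen.
case: ltnP => [lt_u|le_u].
  rewrite lvl_node // chain_of_node ?lt_u // mulrA -exprS subnSK //.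
  exact: leq_trans lt_u (nn_le_head _).
have -> : lvl u = nn (chain_of u) by apply/eqP; rewrite eqn_leq lvl_le_chain.
by rewrite chain_gen_nilpotent mulr0.
Qed.

Lemma Yjbasis_expE u : Y * jbasis u = Y ^+ (n1 - lvl u).+1 * chain_gen (chain_of u) ^+ lvl u.
Proof. by rewrite mulrA -exprS. Qed.

Lemma Yjbasis_vanishes u i : vanishes_below (Y * jbasis u) i (lvl u).
Proof.
have := vanishes_below_mul (@vanishes_below0 _ _ _ (Y ^+ (n1 - lvl u).+1) i)
                           (@exp_vanishes_below _ _ _ _ (chain_gen_root (chain_of u)) i (lvl u)).
by rewrite add0n -Yjbasis_expE.
Qed.

Lemma Yjbasis_lead u i : (lvl u <= nn i)%N ->
  (Y * jbasis u) (node i (lvl u)) =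
  Y None ^+ (n1 - lvl u).+1 * chain_gen (chain_of u) (node i 1) ^+ lvl u.
Proof.
move=> hl; rewrite Yjbasis_expE.
have := mul_node_lead (@vanishes_below0 _ _ _ (Y ^+ (n1 - lvl u).+1) i)
                      (@exp_vanishes_below _ _ _ _ (chain_gen_root (chain_of u)) i (lvl u)).
by rewrite add0n => -> //; rewrite exp_root exp_node_lead ?chain_gen_root.
Qed.

Hypothesis nilpart_node1 : forall i : I, nilpart (node i 1) != 0.

(* Triangularity: at [node c d], the only basis vectors of level [d] that do not
   vanish are those of chain [c] and of the first chain. *)
Lemma Yjbasis_coef_eq0 (al : T -> F) d u :
  (forall i, (d <= nn i)%N -> \sum_v al v * (Y * jbasis v) (node i d) = 0) ->
  (forall v, (lvl v < d)%N -> al v = 0) ->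
  lvl u = d -> (chain_of u != ord0 -> al (node ord0 d) = 0) -> al u = 0.
Proof.
move=> sum0 low hl root_chain.
have hdc : (d <= nn (chain_of u))%N by rewrite -hl lvl_le_chain.
have := sum0 _ hdc; rewrite (bigD1 u) //= big1 ?addr0.
  rewrite -hl Yjbasis_lead ?lvl_le_chain // chain_gen_node1 eqxx orbT => /eqP.
  by rewrite !mulf_eq0 !expf_eq0 (negbTE Y_root) (negbTE (nilpart_node1 _)) !andbF !orbF => /eqP.
move=> v ne_vu; case: (ltngtP (lvl (v : T)) d) => [lt_vd|lt_dv|eq_vd].
- by rewrite low ?mul0r.
- by rewrite (Yjbasis_vanishes lt_dv hdc) mulr0.
have d_gt0 : (0 < d)%N.
  rewrite lt0n; apply: contra ne_vu => /eqP d0.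
  by rewrite -(node_chain_of u) -(node_chain_of v) eq_vd hl d0.
rewrite -eq_vd Yjbasis_lead ?eq_vd // chain_gen_node1.
have [eq_c|ne_c] := eqVneq (chain_of u) (chain_of v).
  by move: ne_vu; rewrite -(node_chain_of u) -(node_chain_of v) eq_c hl eq_vd eqxx.
have [c0|c0] := eqVneq (chain_of v) ord0.
  by rewrite -(node_chain_of v) c0 eq_vd root_chain ?mul0r // -c0.
by rewrite /= expr0n eqn0Ngt d_gt0 !mulr0.
Qed.

Lemma Yjbasis_free (al : T -> F) :
  (forall w, \sum_v al v * (Y * jbasis v) w = 0) -> forall u, al u = 0.
Proof.
move=> sum0; suff low d u : (lvl u < d)%N -> al u = 0 by move=> u; exact: (low (lvl u).+1).
elim: d u => [//|d IH] u; rewrite ltnS leq_eqVlt => /orP[/eqP hud|]; last exact: IH.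
have sum0_node i : (d <= nn i)%N -> \sum_v al v * (Y * jbasis v) (node i d) = 0.
  by move=> _; exact: sum0.
have le_dn1 : (d <= nn (ord0 : I))%N by rewrite -hud (leq_trans (lvl_le_chain u)) ?nn_le_head.
apply: (Yjbasis_coef_eq0 sum0_node IH hud) => _.
by apply: (Yjbasis_coef_eq0 sum0_node IH); rewrite ?lvl_node ?chain_of_node0.
Qed.

Lemma sum_enum_rank (f : 'I_#|{: T}| -> F) : \sum_k f k = \sum_u f (enum_rank u).
Proof. by rewrite (reindex enum_rank) //; apply: onW_bij; exact: enum_rank_bij. Qed.

Definition Yjbasis_mx : 'M[F]_#|{: T}| := \matrix_(k, l) (Y * jbasis (enum_val k)) (enum_val l).

Lemma Yjbasis_mx_unit : Yjbasis_mx \in unitmx.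
Proof.
rewrite -row_free_unit -kermx_eq0; apply/eqP/row_matrixP => k; rewrite row0.
have : row k (kermx Yjbasis_mx) *m Yjbasis_mx = 0 by rewrite -row_mul mulmx_ker row0.
move: (row k _) => v v_ker.
suff v0 : forall u, v 0 (enum_rank u) = 0 by apply/rowP => l; rewrite mxE -(enum_valK l) v0.
apply: Yjbasis_free => w.
transitivity ((v *m Yjbasis_mx) 0 (enum_rank w)); last by rewrite v_ker mxE.
by rewrite mxE sum_enum_rank; apply: eq_bigr => u _; rewrite mxE !enum_rankK.
Qed.

Definition jdual (u : T) : A := [ffun v => invmx Yjbasis_mx (enum_rank v) (enum_rank u)].

Lemma dot_jdual_Yjbasis u v : dot (jdual u) (Y * jbasis v) = (u == v)%:R.
Proof.
transitivity ((Yjbasis_mx *m invmx Yjbasis_mx) (enum_rank v) (enum_rank u)).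
  rewrite mxE sum_enum_rank; apply: eq_bigr => w _.
  by rewrite ffunE mxE !enum_rankK mulrC.
by rewrite mulmxV ?Yjbasis_mx_unit // mxE (inj_eq enum_rank_inj) eq_sym.
Qed.

Lemma dot_jdual_Xjbasis u v : dot (jdual u) (X * jbasis v) =
  eigen * (u == v)%:R + ((lvl v < nn (chain_of v))%N && (u == node (chain_of v) (lvl v).+1))%:R.
Proof.
rewrite -(subrK (cst_alg eigen * Y) X) -/nilpart mulrDl -mulrA dotDr dot_cst_alg.
rewrite dot_jdual_Yjbasis nilpart_mul_jbasis addrC.
by case: ifP => _; rewrite ?dot_jdual_Yjbasis ?dot0r.
Qed.

End JordanBasis.

Section FormPairing.
Variables (F : fieldType) (n1 : nat) (rest : seq nat).
Local Notation G := (gidx (n1 :: rest)).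
Local Notation A := (chain_alg n1 rest F).

Lemma cst_antisym (p q r : G) : cst F q p r = - cst F p q r.
Proof.
case: p q r => [[] u] [[] v] [b w]; rewrite /cst /= ?oppr0 //.
  by case: (b && econd u v w); rewrite ?oppr0.
by case: (b && econd v u w); rewrite ?opprK ?oppr0.
Qed.

Lemma Aform_skew (x : {ffun G -> F}) : (Aform x)^T = - Aform x.
Proof.
apply/matrixP => k l; rewrite !mxE -sumrN.
by apply: eq_bigr => r _; rewrite cst_antisym mulrN.
Qed.

Definition rowvec (V : {ffun G -> F}) : 'rV[F]_#|{: G}| := \row_k V (enum_val k).

Lemma bform_rowvec (M : 'M[F]_#|{: G}|) V1 V2 :
  bform M (rowvec V1) (rowvec V2) = \sum_p \sum_q V1 p * V2 q * M (enum_rank p) (enum_rank q).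
Proof.
have enum_rank_onto : {on [pred _ | true], bijective (@enum_rank G)}.
  by apply: onW_bij; exact: enum_rank_bij.
rewrite /bform mxE (reindex _ enum_rank_onto) [RHS]exchange_big /=.
apply: eq_bigr => q _; rewrite !mxE enum_rankK mulr_suml (reindex _ enum_rank_onto) /=.
by apply: eq_bigr => p _; rewrite !mxE enum_rankK mulrAC.
Qed.

Lemma bform_Aform x V1 V2 :
  bform (Aform x) (rowvec V1) (rowvec V2) = \sum_r x r * lie_br V1 V2 r.
Proof.
rewrite bform_rowvec.
under eq_bigr do under eq_bigr do rewrite mxE !enum_rankK mulr_sumr.
under [RHS]eq_bigr do rewrite ffunE mulr_sumr; rewrite [RHS]exchange_big.
apply: eq_bigr => p _; under [RHS]eq_bigr do rewrite mulr_sumr; rewrite [RHS]exchange_big.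
by apply: eq_bigr => q _; apply: eq_bigr => r _; ring.
Qed.

Definition evec (phi : A) : {ffun G -> F} := [ffun p => if p.1 then phi p.2 else 0].
Definition fvec (b : A) : {ffun G -> F} := [ffun p => if p.1 then 0 else b p.2].

Lemma ecoord_evec phi : ecoord (evec phi) = phi. Proof. by apply/ffunP => u; rewrite !ffunE. Qed.
Lemma fcoord_evec phi : fcoord (evec phi) = 0. Proof. by apply/ffunP => u; rewrite !ffunE. Qed.
Lemma ecoord_fvec b : ecoord (fvec b) = 0. Proof. by apply/ffunP => u; rewrite !ffunE. Qed.
Lemma fcoord_fvec b : fcoord (fvec b) = b. Proof. by apply/ffunP => u; rewrite !ffunE. Qed.

Lemma coact0r b : coact b (0 : A) = 0.
Proof.
apply/ffunP => w; rewrite !ffunE big1 // => u _.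
by rewrite big1 // => v _; rewrite ffunE !mul0r.
Qed.

Lemma pair_lie_brE (x V1 V2 : {ffun G -> F}) : \sum_r x r * lie_br V1 V2 r =
  \sum_w ecoord x w * (coact (fcoord V2) (ecoord V1) - coact (fcoord V1) (ecoord V2)) w.
Proof.
rewrite big_gidx [X in _ + X]big1 ?addr0 => [|w _]; last by rewrite lie_brE mulr0.
by apply: eq_bigr => w _; rewrite lie_brE ecoordE chain_algBE.
Qed.

Lemma sum_mul_coact (X b phi : A) : \sum_w X w * coact b phi w = dot phi (b * X).
Proof.
under eq_bigr do rewrite coact_delta /dot mulr_sumr.
rewrite exchange_big; apply: eq_bigr => u _; rewrite mul_delta_sum mulr_sumr.
by apply: eq_bigr => w _; rewrite mulrCA [X w * _]mulrC.
Qed.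

Lemma bform_Aform_ef x phi b :
  bform (Aform x) (rowvec (evec phi)) (rowvec (fvec b)) = dot phi (ecoord x * b).
Proof.
rewrite bform_Aform pair_lie_brE fcoord_fvec ecoord_evec fcoord_evec ecoord_fvec.
by rewrite coact0r subr0 sum_mul_coact mulrC.
Qed.

Lemma bform_Aform_ee x phi psi : bform (Aform x) (rowvec (evec phi)) (rowvec (evec psi)) = 0.
Proof.
rewrite bform_Aform pair_lie_brE big1 // => w _.
by rewrite !fcoord_evec !coact0l chain_algBE subrr mulr0.
Qed.

Lemma bform_Aform_ff x b c : bform (Aform x) (rowvec (fvec b)) (rowvec (fvec c)) = 0.
Proof.
rewrite bform_Aform pair_lie_brE big1 // => w _.
by rewrite !ecoord_fvec !coact0r chain_algBE subrr mulr0.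
Qed.

End FormPairing.

Section GenericJordanForm.
Variables (F : fieldType) (n1 : nat) (rest : seq nat).
Local Notation ns := (n1 :: rest).
Local Notation T := (lvlT ns).
Local Notation G := (gidx ns).
Local Notation I := ('I_(size ns)).
Hypothesis ns_sorted : sorted geq ns.
Hypothesis ns_pos : all (fun k => 0 < k)%N ns.

(* Jordan block [j] runs down chain [j] (the first one down to the root):
   its [p]-th vector sits at level [nn j - p]. *)
Definition jsizes := n1.+1 :: rest.
Definition jnode j p : T := node (inord j) (nn (inord j : I) - p).
Definition jvalid j p := (j < size ns)%N && (p < nth 0%N jsizes j)%N.

Lemma nth_jsizes j : (j < size ns)%N -> nth 0%N jsizes j = (nn (inord j : I) + (j == 0%N))%N.
Proof. by case: j => [|j] hj; rewrite /nn inordK //= ?addn1 ?addn0. Qed.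

Lemma jvalid_le j p : jvalid j p -> (p <= nn (inord j : I))%N.
Proof.
case/andP => hj; rewrite nth_jsizes //.
by case: (j == 0%N); rewrite ?addn1 ?addn0 // => /ltnW.
Qed.

Lemma lvl_jnode j p : jvalid j p -> lvl (jnode j p) = (nn (inord j : I) - p)%N.
Proof. by move=> hv; rewrite /jnode lvl_node // leq_subr. Qed.

Lemma chain_of_jnode j p : jvalid j p -> chain_of (jnode j p) = inord j.
Proof.
move=> hv; have [lvl0|lvl_gt0] := posnP (nn (inord j : I) - p).
  move: hv; rewrite /jnode lvl0 /= => /andP[hj]; rewrite nth_jsizes //.
  case: eqP => [-> _|_]; first by apply/val_inj; rewrite /= inordK.
  by rewrite addn0 => hp; move/eqP: lvl0; rewrite subn_eq0 leqNgt hp.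
by rewrite /jnode chain_of_node // lvl_gt0 leq_subr.
Qed.

Lemma jnode_eq j p j' q : jvalid j p -> jvalid j' q ->
  (jnode j p == jnode j' q) = (j == j') && (p == q).
Proof.
move=> hv hv'; apply/eqP/andP => [e|[/eqP <- /eqP <-]] //.
have := congr1 (@chain_of n1 rest) e; rewrite !chain_of_jnode // => /(congr1 val).
rewrite /= !inordK; [move=> eq_jj'; subst j' | by case/andP: hv' | by case/andP: hv].
split => //; move: (congr1 (@lvl ns) e) (jvalid_le hv) (jvalid_le hv').
by rewrite !lvl_jnode //; lia.
Qed.

Lemma jnode_succ j q : jvalid j q -> (0 < q)%N ->
  node (inord j) (nn (inord j : I) - q).+1 = jnode j q.-1 /\ jvalid j q.-1.
Proof.
move=> hv q_gt0; have le_q := jvalid_le hv; split.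
  by rewrite /jnode; congr node; lia.
by case/andP: hv => hj hq; rewrite /jvalid hj (leq_trans _ hq) // prednK.
Qed.

Variables (x a : {ffun G -> F}).
Local Notation X := (ecoord x).
Local Notation Y := (ecoord a).
Hypothesis Y_root : Y None != 0.
Hypothesis nilpart_node1 : forall i : I, nilpart X Y (node i 1) != 0.

Lemma jtable_Y j p j' q : jvalid j p -> jvalid j' q ->
  dot (jdual X Y (jnode j p)) (Y * jbasis X Y (jnode j' q)) = if j == j' then (p == q)%:R else 0.
Proof.
move=> hv hv'; rewrite dot_jdual_Yjbasis // jnode_eq //.
by case: (j == j').
Qed.

Lemma jtable_X j p j' q : jvalid j p -> jvalid j' q ->
  dot (jdual X Y (jnode j p)) (X * jbasis X Y (jnode j' q)) =
  if j == j' then jordan_entry (eigen X Y) p q else 0.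
Proof.
move=> hv hv'; rewrite dot_jdual_Xjbasis // jnode_eq // chain_of_jnode // lvl_jnode //.
have -> : ((nn (inord j' : I) - q < nn (inord j' : I))%N &&
           (jnode j p == node (inord j') (nn (inord j' : I) - q).+1)) = (j == j') && (q == p.+1).
  have [->|q_gt0] := posnP q; first by rewrite subn0 ltnn andbF.
  have [-> hv''] := jnode_succ hv' q_gt0.
  rewrite jnode_eq // ltn_subrL q_gt0 nn_gt0 //=.
  by congr (_ && _); apply/eqP/eqP => [->|->]; rewrite ?prednK.
rewrite /jordan_entry; case: (j == j') => /=; last by rewrite mulr0 add0r.
by case: eqP => [->|_]; rewrite ?mulr1 ?mulr0 ?add0r // ltn_eqF ?addr0.
Qed.

Lemma card_gidx : #|{: G}| = (2 * (sumn ns).+1)%N.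
Proof.
rewrite card_prod card_bool card_option card_tagged.
suff -> : [seq #|'I_(nn i)| | i <- enum I] = ns by [].
by rewrite (eq_map (fun i => card_ord (nn i))) -[RHS](mkseq_nth 0%N) /mkseq -val_enum_ord -map_comp.
Qed.

Lemma jk_dim_jordan (l : F) ms : jk_dim (map (Jor (Some l)) ms) = (2 * sumn ms)%N.
Proof. by elim: ms => //= m ms ->; lia. Qed.

Lemma Aform_has_JK_form :
  has_JK_form (Aform x) (Aform a) (map (Jor (Some (eigen X Y))) jsizes).
Proof.
apply: (@has_JK_form_of_tables _ _ _ _ _ _ (fun j p => rowvec (evec (jdual X Y (jnode j p))))
                                        (fun j p => rowvec (fvec (jbasis X Y (jnode j p)))));
  rewrite ?Aform_skew //; last by rewrite jk_dim_jordan card_gidx /=; lia.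
- move=> j j' p q hj hj' hp hq; have hv : jvalid j p by apply/andP.
  have hv' : jvalid j' q by apply/andP.
  by rewrite bform_Aform_ee bform_Aform_ff bform_Aform_ef jtable_X.
- move=> j j' p q hj hj' hp hq; have hv : jvalid j p by apply/andP.
  have hv' : jvalid j' q by apply/andP.
  by rewrite bform_Aform_ee bform_Aform_ff bform_Aform_ef jtable_Y.
Qed.

End GenericJordanForm.

Section Genericity.
Variables (K : fieldType) (n1 : nat) (rest : seq nat).
Local Notation ns := (n1 :: rest).
Local Notation T := (lvlT ns).
Local Notation G := (gidx ns).
Local Notation I := ('I_(size ns)).
Local Notation NN := #|{: G}|.

Lemma gpt_lshift (x a : {ffun G -> K}) p : gpt x a (lshift NN (enum_rank p)) = x p.
Proof.
rewrite /gpt; case: splitP => [k /= hk|k /= hk].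
  by rewrite (_ : k = enum_rank p) ?enum_rankK //; apply: val_inj; rewrite /= -hk.
by move: (ltn_ord (enum_rank p)); rewrite hk ltnNge leq_addr.
Qed.

Lemma gpt_rshift (x a : {ffun G -> K}) p : gpt x a (rshift NN (enum_rank p)) = a p.
Proof.
rewrite /gpt; case: splitP => [k /= hk|k /= /eqP].
  by move: (ltn_ord k); rewrite -hk ltnNge leq_addr.
by rewrite eqn_add2l => /eqP hk; rewrite (_ : k = enum_rank p) ?enum_rankK //; apply: val_inj.
Qed.

Definition xvar (p : G) : {mpoly K[NN + NN]} := 'X_(lshift NN (enum_rank p)).
Definition avar (p : G) : {mpoly K[NN + NN]} := 'X_(rshift NN (enum_rank p)).

(* Its nonvanishing says that [a] has a nonzero [e_0]-coordinate and that
   [x - (x_0 / a_0) a] has a nonzero [e^i_1]-coordinate for every [i]. *)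
Definition genericity_poly : {mpoly K[NN + NN]} :=
  avar (true, None) * \prod_(u : T | lvl u == 1%N)
     (xvar (true, u) * avar (true, None) - xvar (true, None) * avar (true, u)).

Lemma meval_genericity_poly (x a : {ffun G -> K}) :
  meval (gpt x a) genericity_poly = a (true, None) * \prod_(u : T | lvl u == 1%N)
     (x (true, u) * a (true, None) - x (true, None) * a (true, u)).
Proof.
rewrite /genericity_poly mevalM (big_morph _ (mevalM _) (meval1 _)) /avar /xvar mevalXU gpt_rshift.
congr (_ * _); apply: eq_bigr => u _.
by rewrite mevalB !mevalM !mevalXU !gpt_lshift !gpt_rshift.
Qed.

Lemma genericity_poly_neq0_at :
  meval (gpt [ffun _ => 1] [ffun p => (p == (true, None))%:R]) genericity_poly != 0.
Proof.
rewrite meval_genericity_poly !ffunE eqxx mul1r big1 ?oner_eq0 // => u lvl1.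
have u_ne_root : u != None by rewrite -lvl_eq0 (eqP lvl1).
by rewrite !ffunE xpair_eqE eqxx (negbTE u_ne_root) mulr1 mulr0 subr0.
Qed.

Hypothesis ns_pos : all (fun k => 0 < k)%N ns.

Lemma genericity_conditions (x a : {ffun G -> K}) : meval (gpt x a) genericity_poly != 0 ->
  ecoord a None != 0 /\ (forall i : I, nilpart (ecoord x) (ecoord a) (node i 1) != 0).
Proof.
rewrite meval_genericity_poly mulf_eq0 negb_or => /andP[a_root /prodf_neq0 x_gen].
split=> [|i]; first by rewrite ecoordE.
have lvl1 : lvl (node i 1) == 1%N by rewrite lvl_node // nn_gt0.
apply: contra (x_gen _ lvl1); rewrite chain_algBE mul_cst_alg /eigen !ecoordE => /eqP nil0.
rewrite (_ : _ - _ = (x (true, node i 1) - x (true, None) / a (true, None) * a (true, node i 1))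
                      * a (true, None)); first by rewrite nil0 mul0r.
by field.
Qed.

End Genericity.

Theorem theorem7 (R : realType) (ns : seq nat)
  (hs : (0 < size ns)%N)
  (hsorted : sorted geq ns)
  (hpos : all (fun k => 0 < k)%N ns) :
  (* g is a Lie algebra: the bracket (bilinear by construction) is
     alternating and satisfies the Jacobi identity *)
  ((forall X : {ffun gidx ns -> R[i]}, lie_br X X = 0) /\
   (forall X Y Z : {ffun gidx ns -> R[i]},
      lie_br X (lie_br Y Z) + lie_br Y (lie_br Z X) + lie_br Z (lie_br X Y) = 0))
  /\
  (* JK invariants: on a nonempty Zariski open subset of g^* x g^*,
     the pair (A_x, A_a) has JK form the single Jordan tuple
     J_lam(2 n_1 + 2, 2 n_2, ..., 2 n_s) and no Kronecker blocks *)
  (exists U : ('I_(#|{: gidx ns}| + #|{: gidx ns}|) -> R[i]) -> Prop,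
     [/\ zariski_open U,
         exists z, U z &
         forall x a : {ffun gidx ns -> R[i]}, U (gpt x a) ->
           exists lam : option R[i],
             has_JK_form (Aform x) (Aform a) (target_tuple lam ns)]).
Proof.
case: ns hs hsorted hpos => [//|n1 rest] _ ns_sorted ns_pos.
split; first by split; [exact: lie_br_alt | exact: lie_br_jacobi].
pose P := genericity_poly R[i] n1 rest.
exists (fun z => meval z P != 0); split.
- exists (pred1 P) => z; split => [nz|[f [/eqP -> //]]].
  by exists P; rewrite /= eqxx.
- by exists (gpt [ffun _ => 1] [ffun p => (p == (true, None))%:R]); exact: genericity_poly_neq0_at.
move=> x a /(genericity_conditions ns_pos) [Y_root nilpart_node1].
by exists (Some (eigen (ecoord x) (ecoord a))); exact: Aform_has_JK_form.
Qed.
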